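(* Let $\{z_n\}_{n \geq 1}$ be a sequence in $\mathbb{C} \setminus\{i\}$. Then $\prod_{n \geq 1} z_n$ converges absolutely if and only if $\prod_{n \geq 1} T(z_n)$ converges absolutely.
   Context: $T(z) = i\frac{1-iz}{1+iz}$ (defined for $z\neq i$). A product $\prod_{n\ge1} w_n$ is said to converge absolutely if $\sum_{n\ge1}|1-w_n|<\infty$. *)

From Stdlib Require Import Reals.
From Coquelicot Require Import Coquelicot.
Open Scope R_scope.

(* T(z) = i (1 - i z) / (1 + i z); Coquelicot's division is total, the
   relevant hypothesis z <> i guarantees 1 + i z <> 0. *)
Definition T (z : C) : C := (Ci * ((1 - Ci * z) / (1 + Ci * z)))%C.

(* The product prod_{n>=1} w_n converges absolutely iff
   sum_{n>=1} |1 - w_n| < oo.  Sequences are nat -> C, terms indexed n >= 1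
   (the value at index 0 is ignored). *)
Definition abs_conv_prod (w : nat -> C) : Prop :=
  ex_series (fun n => Cmod (1 - w (S n))%C).

(* With T z = (z + i) / (1 + i z) one has
     (1 - T z) (1 + i z) = (1 - i) (1 - z)   and   (1 - z) (T z + i) = (i - 1) (1 - T z),
   and near z = 1 the factors 1 + i z and T z + i stay close to 1 + i, of modulus sqrt 2.
   Hence |1 - T z| and |1 - z| are within a factor 2 of each other once either is small,
   and comparison of series transfers summability of one to the other. *)
From Stdlib Require Import Reals Lra Lia Psatz.
From Coquelicot Require Import Coquelicot.

Lemma ex_series_le_near_0 (a b : nat -> R) (eps K : R) :
  0 < eps -> ex_series b -> (forall n, 0 <= a n) -> (forall n, 0 <= b n) ->
  (forall n, b n < eps -> a n <= K * b n) -> ex_series a.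
Proof.
  intros eps_gt0 sum_b a_ge0 b_ge0 a_le.
  assert (b_lim0 : is_lim_seq b 0) by now apply ex_series_lim_0.
  apply is_lim_seq_spec in b_lim0.
  destruct (b_lim0 (mkposreal eps eps_gt0)) as [N b_small]; simpl in b_small.
  apply (ex_series_incr_n a N).
  apply (@ex_series_le R_AbsRing R_CompleteNormedModule _
           (fun k => scal K (b (N + k)%nat))).
  - intros k. change (Rabs (a (N + k)%nat) <= K * b (N + k)%nat).
    rewrite Rabs_pos_eq by apply a_ge0.
    apply a_le. specialize (b_small (N + k)%nat ltac:(lia)).
    rewrite Rminus_0_r, Rabs_pos_eq in b_small by apply b_ge0. exact b_small.
  - apply (@ex_series_scal R_AbsRing R_NormedModule K (fun k => b (N + k)%nat)).
    now apply (ex_series_incr_n b N).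
Qed.

Lemma Cmod_sub_le_of_add (d r : C) : Cmod (d + r) - Cmod r <= Cmod d.
Proof. pose proof (Cmod_triangle d r). lra. Qed.

Lemma Cmod_le_of_mul_eq (x y c d : C) (m K : R) :
  (x * d = c * y)%C -> 0 < m -> m <= Cmod d -> Cmod c <= K * m ->
  Cmod x <= K * Cmod y.
Proof.
  intros xd_eq m_gt0 m_le c_le.
  assert (mod_eq : Cmod x * Cmod d = Cmod c * Cmod y)
    by now rewrite <- !Cmod_mult, xd_eq.
  pose proof (Cmod_ge_0 x). pose proof (Cmod_ge_0 y).
  apply (Rmult_le_reg_r m); [exact m_gt0|]. nra.
Qed.

Lemma Cmod_1_add_Ci : Cmod (1 + Ci)%C = sqrt 2.
Proof. unfold Cmod; simpl; f_equal; ring. Qed.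

Lemma Cmod_1_sub_Ci : Cmod (1 - Ci)%C = sqrt 2.
Proof. unfold Cmod; simpl; f_equal; ring. Qed.

Lemma Cmod_Ci_sub_1 : Cmod (Ci - 1)%C = sqrt 2.
Proof. unfold Cmod; simpl; f_equal; ring. Qed.

Lemma sqrt2_gt_1 : 1 < sqrt 2.
Proof. rewrite <- sqrt_1. apply sqrt_lt_1_alt. lra. Qed.

Lemma T_denom_neq0 (z : C) : z <> Ci -> (1 + Ci * z <> 0)%C.
Proof.
  intros z_neq denom_eq0. apply z_neq. destruct z as [a b].
  pose proof (f_equal fst denom_eq0). pose proof (f_equal snd denom_eq0). simpl in *.
  apply injective_projections; simpl; lra.
Qed.

Lemma T_mul_denom (z : C) : (1 + Ci * z <> 0)%C ->
  (T z * (1 + Ci * z) = Ci * (1 - Ci * z))%C.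
Proof. intros denom_neq0. unfold T. field. exact denom_neq0. Qed.

Lemma sub_T_mul (z : C) : (1 + Ci * z <> 0)%C ->
  ((1 - T z) * (1 + Ci * z) = (1 - Ci) * (1 - z))%C.
Proof.
  intros denom_neq0.
  replace ((1 - T z) * (1 + Ci * z))%C with (1 + Ci * z - T z * (1 + Ci * z))%C by ring.
  rewrite T_mul_denom by exact denom_neq0.
  destruct z as [a b]. apply injective_projections; simpl; ring.
Qed.

Lemma T_add_Ci_mul (z : C) : (1 + Ci * z <> 0)%C ->
  ((1 - z) * (T z + Ci) = (Ci - 1) * (1 - T z))%C.
Proof.
  intros denom_neq0.
  assert (times_denom : ((1 - z) * (T z + Ci) * (1 + Ci * z)
                         = (Ci - 1) * (1 - T z) * (1 + Ci * z))%C).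
  { replace ((1 - z) * (T z + Ci) * (1 + Ci * z))%C
      with ((1 - z) * (T z * (1 + Ci * z) + Ci * (1 + Ci * z)))%C by ring.
    replace ((Ci - 1) * (1 - T z) * (1 + Ci * z))%C
      with ((Ci - 1) * ((1 - T z) * (1 + Ci * z)))%C by ring.
    rewrite T_mul_denom, sub_T_mul by exact denom_neq0.
    destruct z as [a b]. apply injective_projections; simpl; ring. }
  transitivity ((1 - z) * (T z + Ci) * (1 + Ci * z) / (1 + Ci * z))%C.
  - field. exact denom_neq0.
  - rewrite times_denom. field. exact denom_neq0.
Qed.

Lemma Cmod_sub_T_le (z : C) :
  Cmod (1 - z)%C < / 2 -> Cmod (1 - T z)%C <= 2 * Cmod (1 - z)%C.
Proof.
  intros z_near1. pose proof sqrt2_gt_1.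
  assert (denom_ge : sqrt 2 / 2 <= Cmod (1 + Ci * z)%C).
  { pose proof (Cmod_sub_le_of_add (1 + Ci * z) (Ci * (1 - z))) as lower.
    replace (1 + Ci * z + Ci * (1 - z))%C with (1 + Ci)%C in lower by ring.
    rewrite Cmod_1_add_Ci, Cmod_mult, Cmod_Ci in lower. lra. }
  assert (denom_neq0 : (1 + Ci * z <> 0)%C).
  { intros denom_eq0. rewrite denom_eq0, Cmod_0 in denom_ge. lra. }
  apply (Cmod_le_of_mul_eq _ _ _ _ (sqrt 2 / 2) 2 (sub_T_mul z denom_neq0)); try lra.
  rewrite Cmod_1_sub_Ci. lra.
Qed.

Lemma Cmod_sub_le_of_T (z : C) : z <> Ci ->
  Cmod (1 - T z)%C < / 2 -> Cmod (1 - z)%C <= 2 * Cmod (1 - T z)%C.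
Proof.
  intros z_neq Tz_near1. pose proof sqrt2_gt_1.
  assert (factor_ge : sqrt 2 / 2 <= Cmod (T z + Ci)%C).
  { pose proof (Cmod_sub_le_of_add (T z + Ci) (1 - T z)) as lower.
    replace (T z + Ci + (1 - T z))%C with (1 + Ci)%C in lower by ring.
    rewrite Cmod_1_add_Ci in lower. lra. }
  apply (Cmod_le_of_mul_eq _ _ _ _ (sqrt 2 / 2) 2
           (T_add_Ci_mul z (T_denom_neq0 z z_neq))); try lra.
  rewrite Cmod_Ci_sub_1. lra.
Qed.

Theorem lemma4p2 (z : nat -> C) (hz : forall n : nat, (1 <= n)%nat -> z n <> Ci) :
  abs_conv_prod z <-> abs_conv_prod (fun n => T (z n)).
Proof.
  unfold abs_conv_prod. split; intros sum_conv.
  - apply (ex_series_le_near_0 _ _ (/ 2) 2 ltac:(lra) sum_conv);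
      intros; auto using Cmod_ge_0, Cmod_sub_T_le.
  - apply (ex_series_le_near_0 _ _ (/ 2) 2 ltac:(lra) sum_conv);
      intros n; auto using Cmod_ge_0.
    apply Cmod_sub_le_of_T, hz. lia.
Qed.
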